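(* Let $\mathbb{R}^n_s$ be $\mathbb{R}^n$ with a non-degenerate symmetric bilinear form of signature $(n-s,s)$, and let $G\subset\mathrm{Iso}(\mathbb{R}^n_s)$ be a real Zariski-closed subgroup of dimension $k$ whose centralizer in $\mathrm{Iso}(\mathbb{R}^n_s)$ acts transitively on $\mathbb{R}^n$. Let $\mathfrak{g}$ be the Lie algebra of $G$ and let $X_1,\dots,X_k$ be a Malcev basis of $\mathfrak{g}$, with $X_i=(A_i,v_i)$. For $p\in\mathbb{R}^n$ put $b_i(p)=A_ip+v_i$. Then the orbit $F_p=G.p$ is the affine subspace $$F_p=p+\mathrm{span}\{b_1(p),\dots,b_k(p)\}$$ and $\dim F_p=k$.
   Context: Affine maps of $\mathbb{R}^n$ are written $(I+A,v)$ (linear part $I+A$, translation $v$), identified with the matrix $\begin{pmatrix}I+A&v\\0&1\end{pmatrix}\in\mathrm{GL}_{n+1}(\mathbb{R})$; elements of $\mathfrak{g}$ are written $(A,v)$, identified with $\begin{pmatrix}A&v\\0&0\end{pmatrix}$. $G$ is a unipotent group. A Malcev basis of $\mathfrak{g}$ is a basis $X_1,\dots,X_k$ such that every $g\in G$ can be written uniquely as $g=\exp(t_1X_1+\dots+t_kX_k)$ with real $t_1,\dots,t_k$. *)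

From mathcomp Require Import all_boot all_order all_algebra.
From mathcomp Require Import all_classical all_reals all_analysis.
Set Implicit Arguments. Unset Strict Implicit. Unset Printing Implicit Defensive.
Import Order.TTheory GRing.Theory Num.Theory.
Local Open Scope classical_set_scope.
Local Open Scope ring_scope.

Section Defs.
Variable R : realType.

Definition mxpow (m : nat) (X : 'M[R]_m) (k : nat) : 'M[R]_m :=
  iter k (mulmx X) 1%:M.

Definition mxexp (m : nat) (X : 'M[R]_m) : 'M[R]_m :=
  \matrix_(i, j) limn (fun N : nat => \sum_(l < N) (mxpow X l) i j / (l`!)%:R).

Inductive pexpr (m : nat) : Type :=
| PVar of 'I_m & 'I_m
| PConst of R
| PAdd of pexpr m & pexpr m
| PMul of pexpr m & pexpr m.

Fixpoint peval (m : nat) (e : pexpr m) (M : 'M[R]_m) : R :=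
  match e with
  | PVar i j => M i j
  | PConst c => c
  | PAdd e1 e2 => peval e1 M + peval e2 M
  | PMul e1 e2 => peval e1 M * peval e2 M
  end.

Definition zariski_closed (m : nat) (G : set 'M[R]_m) : Prop :=
  G `<=` [set M | M \in unitmx] /\
  exists (I : Type) (P : I -> pexpr m),
    forall M, M \in unitmx -> (G M <-> forall i, peval (P i) M = 0).

Definition is_subgroup (m : nat) (G : set 'M[R]_m) : Prop :=
  [/\ G 1%:M,
      (forall g h, G g -> G h -> G (g *m h)) &
      (forall g, G g -> g \in unitmx /\ G (invmx g))].

Definition unipotent_group (m : nat) (G : set 'M[R]_m) : Prop :=
  forall g, G g -> exists l, mxpow (g - 1%:M) l = 0.

Definition lie_alg (m : nat) (G : set 'M[R]_m) : set 'M[R]_m :=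
  [set X | forall t : R, G (mxexp (t *: X))].

Definition affmx (n : nat) (L : 'M[R]_n) (v : 'cV[R]_n) : 'M[R]_(n + 1) :=
  block_mx L v 0 1%:M.

Definition act (n : nat) (M : 'M[R]_(n + 1)) (p : 'cV[R]_n) : 'cV[R]_n :=
  usubmx (M *m col_mx p 1%:M).

Definition Jform (n s : nat) : 'M[R]_n :=
  diag_mx (\row_(i < n) (if (i < n - s)%N then 1 else -1)).

Definition form_of_signature (n s : nat) (S : 'M[R]_n) : Prop :=
  (s <= n)%N /\ S^T = S /\
  exists P : 'M[R]_n, P \in unitmx /\ S = P^T *m Jform n s *m P.

Definition Iso (n : nat) (S : 'M[R]_n) : set 'M[R]_(n + 1) :=
  [set M | exists (L : 'M[R]_n) (v : 'cV[R]_n),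
             M = affmx L v /\ L^T *m S *m L = S].

Definition malcev_basis (m k : nat) (G : set 'M[R]_m) (X : 'I_k -> 'M[R]_m) : Prop :=
  [/\ (forall i, lie_alg G (X i)),
      (forall Y, lie_alg G Y -> exists c : 'I_k -> R, Y = \sum_(i < k) c i *: X i),
      (forall c : 'I_k -> R, \sum_(i < k) c i *: X i = 0 -> forall i, c i = 0) &
      (forall g, G g -> exists t : 'I_k -> R,
          g = mxexp (\sum_(i < k) t i *: X i) /\
          forall t' : 'I_k -> R, g = mxexp (\sum_(i < k) t' i *: X i) -> t' =1 t)].

Definition bvec (n : nat) (X : 'M[R]_(n + 1)) (p : 'cV[R]_n) : 'cV[R]_n :=
  ulsubmx X *m p + ursubmx X.

End Defs.

From mathcomp Require Import all_boot all_order all_algebra.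
From mathcomp Require Import all_classical all_reals all_analysis.
From mathcomp Require Import ring lra.
Import Order.TTheory GRing.Theory Num.Theory numFieldNormedType.Exports.
Local Open Scope classical_set_scope.
Local Open Scope ring_scope.
Set Implicit Arguments. Unset Strict Implicit. Unset Printing Implicit Defensive.

(* The centralizer acts transitively, so for every w it contains an isometry
   (L, w); an element Y = (A, v) of g commutes with it, i.e. A w = L v - v.
   As A is skew for the form, comparing the S-norms of both sides shows that
   the quadratic form w |-> <w, A^2 w> equals a linear form in w, so both
   vanish: A^2 = 0 and A v = 0, i.e. Y^2 = 0.  Hence exp Y = 1 + Y, the
   products X_i X_j lie in g, all triple products in g vanish, and G = 1 + g.
   The orbit of p is then p + {b_Y(p) | Y in g}; finally b_Y(p) = 0 forces
   b_Y = 0 on all of R^n (b_Y is equivariant under the transitive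
   centralizer), so Y = 0 and dim F_p = k.  The facts about the Lie algebra
   come from the expansion exp(tX) = 1 + tX + O(t^2) as t -> 0+. *)

Section MatrixExponential.
Variable R : realType.

Lemma mxpowS m (X : 'M[R]_m) l : mxpow X l.+1 = X *m mxpow X l.
Proof. by []. Qed.

Lemma mxpowZ m (X : 'M[R]_m) t l : mxpow (t *: X) l = t ^+ l *: mxpow X l.
Proof.
elim: l => [|l IH]; first by rewrite expr0 scale1r.
by rewrite !mxpowS IH -scalemxAl scalemxAr scalerA exprS scalemxAr.
Qed.

Lemma mxpow_sqr0 m (Y : 'M[R]_m) l : Y *m Y = 0 -> (2 <= l)%N -> mxpow Y l = 0.
Proof.
move=> YY; elim: l => // -[|[|l]] IH // _.
  by rewrite !mxpowS /mxpow /= mulmx1 YY.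
by rewrite mxpowS IH // mulmx0.
Qed.

Lemma mxexp_sqr0 m (Y : 'M[R]_m) : Y *m Y = 0 -> mxexp Y = 1%:M + Y.
Proof.
move=> YY; apply/matrixP => i j; rewrite mxE; apply: norm_lim_near_cst.
have partial N : \sum_(l < N.+2) mxpow Y l i j / l`!%:R = (1%:M + Y) i j.
  elim: N => [|N IH].
    by rewrite !big_ord_recl big_ord0 /= !divr1 mulmx1 addr0 [in RHS]mxE.
  by rewrite big_ord_recr IH (@mxpow_sqr0 _ Y N.+2) // [X in X / _]mxE mul0r /= addr0.
exists 2%N => // N /= N2.
by have := partial (N - 2)%N; rewrite -addn2 subnK.
Qed.

Definition mxsum_abs m (X : 'M[R]_m) : R := \sum_i \sum_j `|X i j|.

Lemma mxsum_abs_ge0 m (X : 'M[R]_m) : 0 <= mxsum_abs X.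
Proof. by apply: sumr_ge0 => i _; apply: sumr_ge0. Qed.

Lemma mxpow_entry_le m (X : 'M[R]_m) l i j : `|mxpow X l i j| <= mxsum_abs X ^+ l.
Proof.
elim: l i j => [|l IH] i j.
  by rewrite expr0 /mxpow /= mxE; case: (i == j); rewrite ?normr1 ?normr0.
rewrite mxpowS mxE exprS.
apply: (le_trans (ler_norm_sum _ _ _)).
apply: (@le_trans _ _ (\sum_k `|X i k| * mxsum_abs X ^+ l)).
  by apply: ler_sum => k _; rewrite normrM; apply: ler_wpM2l.
rewrite -mulr_suml; apply: ler_wpM2r; first exact: exprn_ge0 (mxsum_abs_ge0 _).
rewrite /mxsum_abs [leRHS](bigD1 i) //= lerDl.
by apply: sumr_ge0 => k _; apply: sumr_ge0.
Qed.

Lemma mxexp_term_le m (X : 'M[R]_m) t l i j : 0 < t <= 1 ->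
  `|mxpow (t *: X) l i j / l`!%:R| <= t ^+ minn l 2 * exp_coeff (mxsum_abs X) l.
Proof.
move=> /andP[t0 t1]; rewrite /exp_coeff /= mxpowZ mxE normrM normrM.
rewrite (ger0_norm (exprn_ge0 _ (ltW t0))) [`|_^-1|]ger0_norm ?invr_ge0 ?ler0n //.
rewrite mulrA; apply: ler_wpM2r; first by rewrite invr_ge0 ler0n.
have -> : t ^+ l = t ^+ minn l 2 * t ^+ (l - minn l 2).
  by rewrite -exprD subnKC // geq_minl.
rewrite -mulrA; apply: ler_wpM2l; first by rewrite exprn_ge0 // ltW.
rewrite -[mxsum_abs X ^+ l]mul1r; apply: ler_pM.
- by rewrite exprn_ge0 // ltW.
- by [].
- exact: exprn_ile1 (ltW t0) t1.
- exact: mxpow_entry_le.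
Qed.

Lemma limn_ball (u : R^nat) (c r : R) :
  cvgn u -> (\forall N \near \oo, `|u N - c| <= r) -> `|limn u - c| <= r.
Proof.
move=> cu ur; rewrite ler_norml; apply/andP; split.
  rewrite lerBrDl; apply: limr_ge => //.
  by apply: filterS ur => N; rewrite ler_norml => /andP[+ _]; rewrite lerBrDl.
rewrite lerBlDl; apply: limr_le => //.
by apply: filterS ur => N; rewrite ler_norml => /andP[_]; rewrite lerBlDl.
Qed.

Lemma mxexp_linear_approx m (X : 'M[R]_m) t i j : 0 < t <= 1 ->
  `|mxexp (t *: X) i j - (1%:M i j + t * X i j)| <= t ^+ 2 * expR (mxsum_abs X).
Proof.
move=> t01; have /andP[t0 t1] := t01; set a := mxsum_abs X.
pose u l := mxpow (t *: X) l i j / l`!%:R.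
have a_ge0 : 0 <= a := mxsum_abs_ge0 X.
have u_le l : `|u l| <= t ^+ minn l 2 * exp_coeff a l by exact: mxexp_term_le.
have u0 : u 0%N = 1%:M i j by rewrite /u /= divr1.
have u1 : u 1%N = t * X i j by rewrite /u /= divr1 mulmx1 mxE.
have u_cvg : cvgn (series u).
  apply: normed_cvg; apply: (@series_le_cvg _ _ (exp_coeff a)).
  - by move=> l; rewrite normr_ge0.
  - by move=> l; rewrite exp_coeff_ge0.
  - move=> l; apply: (le_trans (u_le l)); rewrite -[leRHS]mul1r.
    apply: ler_wpM2r; first by rewrite exp_coeff_ge0.
    exact: exprn_ile1 (ltW t0) t1.
  - exact: is_cvg_series_exp_coeff.
have exp_ge N : series (exp_coeff a) N <= expR a.
  apply: nondecreasing_cvgn_le; last exact: is_cvg_series_exp_coeff.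
  by apply: nondecreasing_series => l _ _; rewrite exp_coeff_ge0.
have tail N : `|series u N.+2 - (1%:M i j + t * X i j)| <= t ^+ 2 * expR a.
  rewrite /series /= big_ltn // big_ltn // u0 u1 addrA (addrC (_ + _ + _)) addKr.
  apply: (le_trans (ler_norm_sum _ _ _)).
  apply: (@le_trans _ _ (\sum_(2 <= l < N.+2) t ^+ 2 * exp_coeff a l)).
    apply: ler_sum_nat => l /andP[l2 _]; apply: (le_trans (u_le l)).
    by rewrite (minn_idPr l2).
  rewrite -mulr_sumr; apply: ler_wpM2l; first by rewrite exprn_ge0 // ltW.
  apply: le_trans (exp_ge N.+2); rewrite /series /= [in leRHS]big_ltn // [in leRHS]big_ltn //.
  by rewrite addrA lerDr addr_ge0 // exp_coeff_ge0.
have -> : mxexp (t *: X) i j = limn (series u).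
  by rewrite mxE; congr (limn _); apply: funext => N; rewrite /series /= big_mkord.
apply: limn_ball => //; exists 2%N => // N /= N2.
by have := tail (N - 2)%N; rewrite -addn2 subnK.
Qed.

End MatrixExponential.

Section SmallTime.
Variable R : realType.

Definition bounded_on01 a b (f : R -> 'M[R]_(a, b)) :=
  exists K, forall t, 0 < t <= 1 -> forall i j, `|f t i j| <= K.

Lemma bounded_on01_cst a b (M : 'M[R]_(a, b)) : bounded_on01 (fun=> M).
Proof.
exists (\sum_i \sum_j `|M i j|) => t _ i j.
rewrite (bigD1 i) //= (bigD1 j) //= -addrA lerDl addr_ge0 //.
  by apply: sumr_ge0.
by apply: sumr_ge0 => ? _; apply: sumr_ge0.
Qed.

Lemma bounded_on01D a b (f g : R -> 'M[R]_(a, b)) :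
  bounded_on01 f -> bounded_on01 g -> bounded_on01 (fun t => f t + g t).
Proof.
move=> [K1 f_le] [K2 g_le]; exists (K1 + K2) => t t01 i j; rewrite mxE.
by apply: (le_trans (ler_normD _ _)); apply: lerD; [apply: f_le | apply: g_le].
Qed.

Lemma bounded_on01N a b (f : R -> 'M[R]_(a, b)) :
  bounded_on01 f -> bounded_on01 (fun t => - f t).
Proof. by move=> [K f_le]; exists K => t t01 i j; rewrite mxE normrN; apply: f_le. Qed.

Lemma bounded_on01Z a b (f : R -> 'M[R]_(a, b)) :
  bounded_on01 f -> bounded_on01 (fun t => t *: f t).
Proof.
move=> [K f_le]; exists `|K| => t t01 i j; have /andP[t0 t1] := t01.
rewrite mxE normrM -[`|K|]mul1r; apply: ler_pM => //; first by rewrite ger0_norm // ltW.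
exact: le_trans (f_le t t01 i j) (ler_norm _).
Qed.

Lemma bounded_on01M a b c (f : R -> 'M[R]_(a, b)) (g : R -> 'M[R]_(b, c)) :
  bounded_on01 f -> bounded_on01 g -> bounded_on01 (fun t => f t *m g t).
Proof.
move=> [K1 f_le] [K2 g_le]; exists (b%:R * (`|K1| * `|K2|)) => t t01 i j.
rewrite mxE; apply: (le_trans (ler_norm_sum _ _ _)).
have -> : b%:R * (`|K1| * `|K2|) = \sum_(k < b) `|K1| * `|K2|.
  by rewrite sumr_const card_ord mulr_natl.
apply: ler_sum => k _.
rewrite normrM; apply: ler_pM => //.
  exact: le_trans (f_le t t01 i k) (ler_norm _).
exact: le_trans (g_le t t01 k j) (ler_norm _).
Qed.

Lemma bounded_on01_select a b a' b' (F : 'M[R]_(a, b) -> 'M[R]_(a', b'))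
    (f : R -> 'M[R]_(a, b)) :
  (forall M i j, exists i' j', F M i j = M i' j') ->
  bounded_on01 f -> bounded_on01 (fun t => F (f t)).
Proof.
move=> F_select [K f_le]; exists K => t t01 i j.
by have [i' [j' ->]] := F_select (f t) i j; apply: f_le.
Qed.

Lemma bounded_on01_ulsub a b (f : R -> 'M[R]_(a + b)) :
  bounded_on01 f -> bounded_on01 (fun t => ulsubmx (f t)).
Proof. by apply: bounded_on01_select => M i j; rewrite !mxE; do 2 eexists. Qed.

Lemma bounded_on01_dlsub a b (f : R -> 'M[R]_(a + b)) :
  bounded_on01 f -> bounded_on01 (fun t => dlsubmx (f t)).
Proof. by apply: bounded_on01_select => M i j; rewrite !mxE; do 2 eexists. Qed.

Lemma bounded_on01_drsub a b (f : R -> 'M[R]_(a + b)) :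
  bounded_on01 f -> bounded_on01 (fun t => drsubmx (f t)).
Proof. by apply: bounded_on01_select => M i j; rewrite !mxE; do 2 eexists. Qed.

Lemma bounded_on01_tr a b (f : R -> 'M[R]_(a, b)) :
  bounded_on01 f -> bounded_on01 (fun t => (f t)^T).
Proof. by apply: bounded_on01_select => M i j; rewrite mxE; do 2 eexists. Qed.

Lemma bounded_on01_scale_eq0 a b (M : 'M[R]_(a, b)) (f : R -> 'M[R]_(a, b)) :
  bounded_on01 f -> (forall t, 0 < t <= 1 -> M = t *: f t) -> M = 0.
Proof.
move=> [K f_le] Mf; apply/matrixP => i j; rewrite mxE.
apply/eqP; rewrite -normr_eq0; apply/eqP/le_anti; rewrite normr_ge0 andbT.
have K0 : 0 <= K by apply: le_trans (f_le 1 _ i j); rewrite ?normr_ge0 ?ltr01 ?lexx.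
apply/ler_addgt0Pr => e e0.
have K1_gt0 : 0 < K + 1 by rewrite ltr_wpDl.
pose t := Num.min 1 (e / (K + 1)).
have t0 : 0 < t by rewrite lt_min ltr01 divr_gt0.
have t01 : 0 < t <= 1 by rewrite t0 ge_min lexx.
rewrite (Mf t t01) mxE normrM add0r (ger0_norm (ltW t0)).
apply: (@le_trans _ _ (t * (K + 1))).
  by apply: ler_wpM2l; [rewrite ltW | apply: le_trans (f_le t t01 i j) _; rewrite lerDl].
by rewrite -ler_pdivlMr // ge_min lexx orbT.
Qed.

Lemma scale_cancel a b (t : R) (M N : 'M[R]_(a, b)) :
  t != 0 -> t *: M + t ^+ 2 *: N = 0 -> M = t *: - N.
Proof.
move=> t0 MN; apply: (scalerI t0); rewrite scalerA -expr2 scalerN.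
by apply/eqP; rewrite -addr_eq0 MN.
Qed.

Definition mxexp_rem m (X : 'M[R]_m) (t : R) : 'M[R]_m :=
  t^-2 *: (mxexp (t *: X) - 1%:M - t *: X).

Lemma mxexp_remE m (X : 'M[R]_m) t : 0 < t ->
  mxexp (t *: X) = 1%:M + t *: X + t ^+ 2 *: mxexp_rem X t.
Proof.
move=> t0; rewrite /mxexp_rem scalerA divff ?scale1r ?expf_neq0 ?gt_eqF //.
by rewrite addrCA addrK subrK.
Qed.

Lemma mxexp_rem_bounded m (X : 'M[R]_m) : bounded_on01 (mxexp_rem X).
Proof.
exists (expR (mxsum_abs X)) => t t01 i j; have /andP[t0 _] := t01.
rewrite !mxE normrM ger0_norm; last by rewrite invr_ge0 exprn_ge0 // ltW.
rewrite mulrC ler_pdivrMr ?exprn_gt0 // [leRHS]mulrC.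
have := @mxexp_linear_approx R _ X t i j t01.
by rewrite !mxE opprD addrA.
Qed.

End SmallTime.

Section LieAlgebra.
Variable R : realType.

Lemma lie_alg_commute m (G : set 'M[R]_m) (X c : 'M[R]_m) :
  lie_alg G X -> (forall g, G g -> c *m g = g *m c) -> c *m X = X *m c.
Proof.
move=> XG cG; apply/eqP; rewrite -subr_eq0; apply/eqP.
apply: (@bounded_on01_scale_eq0 _ _ _ _
  (fun t => mxexp_rem X t *m c - c *m mxexp_rem X t)).
  apply: bounded_on01D (bounded_on01N _).
    exact: bounded_on01M (mxexp_rem_bounded X) (bounded_on01_cst c).
  exact: bounded_on01M (bounded_on01_cst c) (mxexp_rem_bounded X).
move=> t /andP[t0 _]; have := cG _ (XG t); rewrite mxexp_remE //.
move: (mxexp_rem X t) => B.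
rewrite !mulmxDr !mulmxDl mulmx1 mul1mx -!scalemxAr -!scalemxAl -!addrA => /addrI/eqP.
rewrite -subr_eq0 opprD addrACA -scalerBr -scalerBr => /eqP /(scale_cancel (lt0r_neq0 t0)).
by rewrite opprB.
Qed.

Lemma isometry_first_order n (S D : 'M[R]_n) t : t != 0 ->
  (1%:M + t *: D)^T *m S *m (1%:M + t *: D) = S ->
  D^T *m S + S *m D = t *: - (D^T *m S *m D).
Proof.
move=> t0 LS; apply: scale_cancel => //; apply: (addrI S); rewrite addr0 -[RHS]LS.
rewrite [(1%:M + _)^T]linearD /= trmx1 [(t *: D)^T]linearZ /= mulmxDl mul1mx.
by rewrite !mulmxDr mulmx1 mulmxDl -!scalemxAl -!scalemxAr !scalerDr scalerA -expr2 !addrA.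
Qed.

Lemma lie_alg_Iso_expansion n (S : 'M[R]_n) (G : set 'M[R]_(n + 1)) X t :
  G `<=` Iso S -> lie_alg G X -> 0 < t ->
  [/\ exists2 L : 'M[R]_n, L^T *m S *m L = S &
        L = 1%:M + t *: (ulsubmx X + t *: ulsubmx (mxexp_rem X t)),
      dlsubmx X = t *: - dlsubmx (mxexp_rem X t) &
      drsubmx X = t *: - drsubmx (mxexp_rem X t)].
Proof.
move=> GIso XG t0; have [L [v [gE LS]]] := GIso _ (XG t).
rewrite mxexp_remE // /affmx -[Y in 1%:M + t *: Y]submxK in gE.
rewrite -[mxexp_rem X t]submxK (@scalar_mx_block _ n 1 1) in gE.
rewrite !scale_block_mx !add_block_mx in gE.
have [eL _ edl edr] := eq_block_mx gE.
split.
- by exists L => //; rewrite -eL scalerDr scalerA -expr2 addrA.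
- by apply: scale_cancel; [rewrite gt_eqF | rewrite -[RHS]edl add0r].
- apply: scale_cancel; first by rewrite gt_eqF.
  by apply: (addrI 1%:M); rewrite addr0 addrA edr.
Qed.

Section IsoLie.
Variables (n : nat) (S : 'M[R]_n) (G : set 'M[R]_(n + 1)) (X : 'M[R]_(n + 1)).
Hypotheses (GIso : G `<=` Iso S) (XG : lie_alg G X).

Lemma lie_alg_Iso_bottom : dlsubmx X = 0 /\ drsubmx X = 0.
Proof.
split.
- apply: (bounded_on01_scale_eq0 (bounded_on01N
    (bounded_on01_dlsub (mxexp_rem_bounded X)))) => t /andP[t0 _].
  by have [_ -> _] := lie_alg_Iso_expansion GIso XG t0.
- apply: (bounded_on01_scale_eq0 (bounded_on01N
    (bounded_on01_drsub (mxexp_rem_bounded X)))) => t /andP[t0 _].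
  by have [_ _ ->] := lie_alg_Iso_expansion GIso XG t0.
Qed.

Lemma lie_alg_Iso_skew : (ulsubmx X)^T *m S + S *m ulsubmx X = 0.
Proof.
pose B t := ulsubmx (mxexp_rem X t); pose D t := ulsubmx X + t *: B t.
have B_bd : bounded_on01 B := bounded_on01_ulsub (mxexp_rem_bounded X).
have D_bd : bounded_on01 D := bounded_on01D (bounded_on01_cst _) (bounded_on01Z B_bd).
have form_bd (A : R -> 'M[R]_n) : bounded_on01 A -> bounded_on01 (fun t => (A t)^T *m S).
  by move=> A_bd; apply: bounded_on01M (bounded_on01_tr A_bd) (bounded_on01_cst S).
have DSD_bd : bounded_on01 (fun t => (D t)^T *m S *m D t).
  exact: bounded_on01M (form_bd D D_bd) D_bd.
have BS_bd : bounded_on01 (fun t => (B t)^T *m S + S *m B t).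
  exact: bounded_on01D (form_bd B B_bd) (bounded_on01M (bounded_on01_cst S) B_bd).
apply: (bounded_on01_scale_eq0 (bounded_on01D (bounded_on01N DSD_bd) (bounded_on01N BS_bd))).
move=> t /andP[t0 _]; have [[L LS eL] _ _] := lie_alg_Iso_expansion GIso XG t0.
rewrite eL in LS; have := isometry_first_order (lt0r_neq0 t0) LS.
rewrite /D /B /= scalerBr => <-.
rewrite linearD /= linearZ /= mulmxDl mulmxDr -scalemxAl -scalemxAr.
by apply/matrixP => i j; rewrite !mxE; ring.
Qed.

End IsoLie.
End LieAlgebra.

Section SymmetricForm.
Variables (R : realType) (n : nat) (S : 'M[R]_n).

Definition bform (x y : 'cV[R]_n) : R := (x^T *m S *m y) 0 0.

Lemma bformDl x y z : bform (x + y) z = bform x z + bform y z.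
Proof. by rewrite /bform linearD /= !mulmxDl mxE. Qed.

Lemma bformDr x y z : bform x (y + z) = bform x y + bform x z.
Proof. by rewrite /bform mulmxDr mxE. Qed.

Lemma bformNl x y : bform (- x) y = - bform x y.
Proof. by rewrite /bform linearN /= !mulNmx mxE. Qed.

Lemma bformNr x y : bform x (- y) = - bform x y.
Proof. by rewrite /bform mulmxN mxE. Qed.

Lemma bformZl a x y : bform (a *: x) y = a * bform x y.
Proof. by rewrite /bform linearZ /= -!scalemxAl mxE. Qed.

Lemma bformZr a x y : bform x (a *: y) = a * bform x y.
Proof. by rewrite /bform -scalemxAr mxE. Qed.

Lemma bformC : S^T = S -> forall x y, bform x y = bform y x.
Proof.
move=> S_sym x y; rewrite /bform -[in LHS](trmxK (x^T *m S *m y)) [in LHS]mxE.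
by rewrite !trmx_mul trmxK S_sym mulmxA.
Qed.

Lemma bform_skew (A : 'M[R]_n) : A^T *m S + S *m A = 0 ->
  forall x y, bform (A *m x) y = - bform x (A *m y).
Proof.
move=> A_skew x y; have AS : A^T *m S = - (S *m A) by apply/eqP; rewrite -addr_eq0 A_skew.
by rewrite /bform trmx_mul -(mulmxA x^T) AS mulmxN mulNmx !mulmxA mxE.
Qed.

Lemma bform_isometry (L : 'M[R]_n) : L^T *m S *m L = S ->
  forall x y, bform (L *m x) (L *m y) = bform x y.
Proof.
by move=> LS x y; rewrite /bform -{2}LS trmx_mul !mulmxA.
Qed.

Lemma bform_nondeg : S \in unitmx -> forall z, (forall x, bform x z = 0) -> z = 0.
Proof.
move=> S_unit z z_orth; have Sz : S *m z = 0.
  apply/matrixP => i j; rewrite [RHS]mxE (ord1 j).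
  have := z_orth (delta_mx i 0); rewrite /bform trmx_delta -mulmxA -rowE => <-.
  by rewrite [RHS]mxE.
by rewrite -[z]mul1mx -(mulVmx S_unit) -mulmxA Sz mulmx0.
Qed.

End SymmetricForm.

Lemma mx_eq0_of_mul_eq0 (R : pzRingType) m n (M : 'M[R]_(m, n)) :
  (forall y : 'cV[R]_n, M *m y = 0) -> M = 0.
Proof.
move=> My; apply/matrixP => i j.
by have /matrixP/(_ i 0) := My (delta_mx j 0); rewrite -colE !mxE.
Qed.

Section CommutingSquareZero.
Variables (R : realType) (n : nat) (S : 'M[R]_n).
Hypotheses (S_sym : S^T = S) (S_unit : S \in unitmx).

Lemma sqr0_of_commute_isometries (Y : 'M[R]_(n + 1)) :
  dlsubmx Y = 0 -> drsubmx Y = 0 -> (ulsubmx Y)^T *m S + S *m ulsubmx Y = 0 ->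
  (forall w : 'cV[R]_n, exists2 L : 'M[R]_n,
     L^T *m S *m L = S & affmx L w *m Y = Y *m affmx L w) ->
  Y *m Y = 0.
Proof.
move=> Ydl Ydr Yskew Ycomm; set A := ulsubmx Y; set v := ursubmx Y.
have YE : Y = block_mx A v 0 0 by rewrite -Ydl -Ydr submxK.
have skew := bform_skew Yskew.
have Aw w : exists2 L : 'M[R]_n,
    (forall x y, bform S (L *m x) (L *m y) = bform S x y) & A *m w = L *m v - v.
  have [L LS LY] := Ycomm w; exists L; first exact: bform_isometry.
  move: LY; rewrite YE /affmx !mulmx_block => /eq_block_mx[_ + _ _].
  by rewrite mulmx0 addr0 mulmx1 => ->; rewrite addrK.
pose Q w := bform S w (A *m (A *m w)); pose lin w := bform S w (A *m v).
have Q_lin w : Q w + 2 * lin w = 0.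
  have [L L_iso ALv] := Aw w.
  have AwAw : bform S (A *m w) (A *m w) = -2 * bform S (A *m w) v.
    rewrite ALv !bformDl !bformDr !bformNl !bformNr L_iso (bformC S_sym v (L *m v)).
    ring.
  by move: AwAw; rewrite !skew -/(Q w) -/(lin w); lra.
have Q0 w : Q w = 0 /\ lin w = 0.
  have := Q_lin (2 *: w); rewrite /Q /lin -!scalemxAr !bformZl !bformZr -/(Q w) -/(lin w).
  by have := Q_lin w; split; lra.
have Av : A *m v = 0 by apply: (bform_nondeg S_unit) => x; case: (Q0 x).
have AA : A *m A = 0.
  apply: mx_eq0_of_mul_eq0 => y; rewrite -mulmxA; apply: (bform_nondeg S_unit) => x.
  have AA0 z : bform S z (A *m (A *m z)) = 0 by case: (Q0 z).
  have AA_sym : bform S x (A *m (A *m y)) = bform S y (A *m (A *m x)).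
    by apply: oppr_inj; rewrite -!skew bformC.
  by have := AA0 (x + y); rewrite !mulmxDr !bformDl !bformDr !AA0 AA_sym; lra.
by rewrite YE mulmx_block !mul0mx !mulmx0 !addr0 AA Av block_mx0.
Qed.

End CommutingSquareZero.

Section Span.
Variables (R : realType) (m k : nat) (X : 'I_k -> 'M[R]_m).

Definition span_of (Y : 'M[R]_m) := exists c : 'I_k -> R, Y = \sum_i c i *: X i.

Lemma span_of0 : span_of 0.
Proof. by exists (fun=> 0); rewrite big1 // => i _; rewrite scale0r. Qed.

Lemma span_ofD Y Z : span_of Y -> span_of Z -> span_of (Y + Z).
Proof.
move=> [c ->] [d ->]; exists (fun i => c i + d i).
by rewrite -big_split; apply: eq_bigr => i _; rewrite scalerDl.
Qed.

Lemma span_ofZ a Y : span_of Y -> span_of (a *: Y).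
Proof.
move=> [c ->]; exists (fun i => a * c i).
by rewrite scaler_sumr; apply: eq_bigr => i _; rewrite scalerA.
Qed.

Lemma span_ofB Y Z : span_of Y -> span_of Z -> span_of (Y - Z).
Proof. by move=> Yspan Zspan; rewrite -scaleN1r; exact: span_ofD Yspan (span_ofZ _ Zspan). Qed.

Lemma span_of_gen i : span_of (X i).
Proof.
exists (fun j => (j == i)%:R); rewrite (bigD1 i) //= eqxx scale1r big1 ?addr0 //.
by move=> j /negbTE ->; rewrite scale0r.
Qed.

Lemma span_of_ind (P : 'M[R]_m -> Prop) :
  P 0 -> (forall Y Z, P Y -> P Z -> P (Y + Z)) -> (forall a i, P (a *: X i)) ->
  forall Y, span_of Y -> P Y.
Proof. by move=> P0 PD PX Y [c ->]; apply: big_ind. Qed.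

End Span.

Section SquareZeroSpan.
Variables (R : realType) (m k : nat) (X : 'I_k -> 'M[R]_m).
Hypothesis span_sqr0 : forall Y, span_of X Y -> Y *m Y = 0.
Hypothesis span_mul : forall Y Z, span_of X Y -> span_of X Z -> span_of X (Y *m Z).

Lemma span_mul_anti Y Z : span_of X Y -> span_of X Z -> Y *m Z = - (Z *m Y).
Proof.
move=> Yspan Zspan; have := span_sqr0 (span_ofD Yspan Zspan).
rewrite mulmxDl !mulmxDr (span_sqr0 Yspan) (span_sqr0 Zspan) add0r addr0 => /eqP.
by rewrite addr_eq0 => /eqP.
Qed.

Lemma span_mul3 Y Z U : span_of X Y -> span_of X Z -> span_of X U -> Y *m Z *m U = 0.
Proof.
move=> Yspan Zspan Uspan.
have e1 : Y *m Z *m U = - (Z *m U *m Y).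
  by rewrite -mulmxA (span_mul_anti Yspan (span_mul Zspan Uspan)).
have e2 : Y *m Z *m U = Z *m U *m Y.
  rewrite (span_mul_anti Yspan Zspan) mulNmx -(mulmxA Z Y U) (span_mul_anti Yspan Uspan).
  by rewrite mulmxN opprK mulmxA.
have ZUY0 : Z *m U *m Y = 0.
  have : (Z *m U *m Y) *+ 2 = 0 by rewrite mulr2n -{1}e2 e1 addNr.
  by rewrite -scaler_nat => /eqP; rewrite scaler_eq0 pnatr_eq0 => /orP[|/eqP].
by rewrite e1 ZUY0 oppr0.
Qed.

(* With a = t/2: (1 + aY)(1 + aZ) = 1 + U + V and (1 + aZ)(1 + aY) = 1 + U - V
   for U = a(Y + Z) and V = a^2 YZ, while (1 + U + V)(1 + U - V) = 1 + t(Y + Z). *)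
Lemma subgroup_one_add_span (G : set 'M[R]_m) : is_subgroup G ->
  (forall i t, G (1%:M + t *: X i)) -> forall Y, span_of X Y -> G (1%:M + Y).
Proof.
move=> [G1 GM _] GX Y Yspan.
suff [_ /(_ 1)] : span_of X Y /\ forall t, G (1%:M + t *: Y) by rewrite scale1r.
move: Y Yspan; apply: span_of_ind.
- by split; [exact: span_of0 | move=> t; rewrite scaler0 addr0].
- move=> Y Z [Yspan YG] [Zspan ZG]; split; first exact: span_ofD.
  move=> t; pose a := t / 2; pose U := a *: (Y + Z); pose V := (a * a) *: (Y *m Z).
  have Uspan : span_of X U by apply/span_ofZ/span_ofD.
  have YZ : (1%:M + a *: Y) *m (1%:M + a *: Z) = 1%:M + U + V.
    rewrite /U /V !mulmxDl !mulmxDr !mul1mx !mulmx1 -scalemxAl -scalemxAr scalerA.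
    by apply/matrixP => i j; rewrite !mxE; ring.
  have ZY : (1%:M + a *: Z) *m (1%:M + a *: Y) = 1%:M + U - V.
    rewrite /U /V !mulmxDl !mulmxDr !mul1mx !mulmx1 -scalemxAl -scalemxAr scalerA.
    rewrite (span_mul_anti Zspan Yspan) scalerN.
    by apply/matrixP => i j; rewrite !mxE; ring.
  have UV : U *m V = 0 by rewrite /V -scalemxAr mulmxA (span_mul3 Uspan Yspan Zspan) scaler0.
  have VU : V *m U = 0 by rewrite /V -scalemxAl (span_mul3 Yspan Zspan Uspan) scaler0.
  have VV : V *m V = 0.
    by rewrite /V -scalemxAl -scalemxAr mulmxA (span_mul3 Yspan Zspan Yspan) mul0mx !scaler0.
  have -> : 1%:M + t *: (Y + Z) = (1%:M + U + V) *m (1%:M + U - V).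
    rewrite !mulmxDl !mulmxDr !mulmxN !mul1mx !mulmx1 (span_sqr0 Uspan) UV VU VV.
    by rewrite /U /a; apply/matrixP => i j; rewrite !mxE; field.
  by rewrite -YZ -ZY; apply: (GM); apply: (GM); [exact: YG | exact: ZG | exact: ZG | exact: YG].
- by move=> a i; split; [exact/span_ofZ/span_of_gen | move=> t; rewrite scalerA].
Qed.

End SquareZeroSpan.

Section AffineAction.
Variables (R : realType) (n : nat).

Lemma bvecE (Y : 'M[R]_(n + 1)) p : usubmx (Y *m col_mx p 1%:M) = bvec Y p.
Proof. by rewrite -{1}[Y]submxK mul_block_col col_mxKu mulmx1. Qed.

Lemma bvec_sum k (c : 'I_k -> R) (X : 'I_k -> 'M[R]_(n + 1)) p :
  bvec (\sum_i c i *: X i) p = \sum_i c i *: bvec (X i) p.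
Proof.
rewrite -bvecE mulmx_suml linear_sum; apply: eq_bigr => i _.
by rewrite -scalemxAl linearZ /= bvecE.
Qed.

Lemma act_affmx (L : 'M[R]_n) w p : act (affmx L w) p = L *m p + w.
Proof. by rewrite /act /affmx mul_block_col col_mxKu mulmx1. Qed.

Lemma act_one_add (Y : 'M[R]_(n + 1)) p : act (1%:M + Y) p = p + bvec Y p.
Proof. by rewrite /act mulmxDl mul1mx linearD /= col_mxKu bvecE. Qed.

Lemma bvec_act (Y : 'M[R]_(n + 1)) L w p : dlsubmx Y = 0 -> drsubmx Y = 0 ->
  affmx L w *m Y = Y *m affmx L w -> bvec Y (act (affmx L w) p) = L *m bvec Y p.
Proof.
move=> Ydl Ydr; set A := ulsubmx Y; set v := ursubmx Y.
have YE : Y = block_mx A v 0 0 by rewrite -Ydl -Ydr submxK.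
rewrite {1 2}YE /affmx !mulmx_block !mulmx0 !mul0mx !addr0 !mulmx1.
move=> /eq_block_mx[LA Lv _ _].
by rewrite act_affmx /bvec -/A -/v !mulmxDr !mulmxA -LA -addrA -Lv.
Qed.

End AffineAction.

Section Orbits.
Variables (R : realType) (n k : nat) (S : 'M[R]_n) (G : set 'M[R]_(n + 1)).
Variable X : 'I_k -> 'M[R]_(n + 1).
Hypotheses (S_sym : S^T = S) (S_unit : S \in unitmx).
Hypotheses (G_sub : is_subgroup G) (G_Iso : G `<=` Iso S).
Hypothesis G_tr : forall p q : 'cV[R]_n, exists c, Iso S c /\
  (forall g, G g -> c *m g = g *m c) /\ act c p = q.
Hypothesis X_malcev : malcev_basis G X.

Local Notation span := (span_of X).

Lemma malcev_lie i : lie_alg G (X i).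
Proof. by case: X_malcev. Qed.

Lemma span_bottom Y : span Y -> dlsubmx Y = 0 /\ drsubmx Y = 0.
Proof.
move=> [c ->]; rewrite /dlsubmx /drsubmx !linear_sum.
split; apply: big1 => i _; have [Xdl Xdr] := lie_alg_Iso_bottom G_Iso (malcev_lie i).
  by rewrite !linearZ /= -/(dlsubmx (X i)) Xdl scaler0.
by rewrite !linearZ /= -/(drsubmx (X i)) Xdr scaler0.
Qed.

Lemma span_skew Y : span Y -> (ulsubmx Y)^T *m S + S *m ulsubmx Y = 0.
Proof.
move=> [c ->]; rewrite /ulsubmx !linear_sum mulmx_suml -big_split.
apply: big1 => i _ /=; rewrite !linearZ /= -/(ulsubmx (X i)).
by rewrite -scalemxAl -scalerDr (lie_alg_Iso_skew G_Iso (malcev_lie i)) scaler0.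
Qed.

Lemma span_centralized Y c :
  span Y -> (forall g, G g -> c *m g = g *m c) -> c *m Y = Y *m c.
Proof.
move=> [d ->] cG; rewrite mulmx_sumr mulmx_suml; apply: eq_bigr => i _.
by rewrite -scalemxAr -scalemxAl (lie_alg_commute (malcev_lie i) cG).
Qed.

Lemma span_sqr0 Y : span Y -> Y *m Y = 0.
Proof.
move=> Yspan; have [Ydl Ydr] := span_bottom Yspan.
apply: (sqr0_of_commute_isometries S_sym S_unit Ydl Ydr (span_skew Yspan)) => w.
have [c [[L [w' [cE LS]]] [cG c0w]]] := G_tr 0 w.
exists L => //; move: c0w; rewrite cE act_affmx mulmx0 add0r => w'E.
by rewrite -w'E -cE; exact: span_centralized.
Qed.

Lemma G_one_add_span g : G g -> exists2 Y, span Y & g = 1%:M + Y.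
Proof.
move=> Gg; case: X_malcev => _ _ _ /(_ g Gg) [t [-> _]].
have Yspan : span (\sum_i t i *: X i) by exists t.
by exists (\sum_i t i *: X i) => //; rewrite mxexp_sqr0 // span_sqr0.
Qed.

Lemma G_one_add_gen i t : G (1%:M + t *: X i).
Proof.
rewrite -mxexp_sqr0; first exact: malcev_lie.
by apply: span_sqr0; apply: span_ofZ; apply: span_of_gen.
Qed.

Lemma span_mul_closed Y Z : span Y -> span Z -> span (Y *m Z).
Proof.
have [_ G_mul _] := G_sub.
have gen_mul i j : span (X i *m X j).
  have [W Wspan e] := G_one_add_span (G_mul _ _ (G_one_add_gen i 1) (G_one_add_gen j 1)).
  have -> : X i *m X j = W - X i - X j.
    move: e; rewrite !scale1r mulmxDl mul1mx mulmxDr mulmx1 -!addrA => /addrI <-.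
    by apply/matrixP => a b; rewrite !mxE; ring.
  exact: span_ofB (span_ofB Wspan (span_of_gen X i)) (span_of_gen X j).
move=> Yspan Zspan; move: Y Yspan; apply: span_of_ind.
- by rewrite mul0mx; exact: span_of0.
- by move=> Y1 Y2 ? ?; rewrite mulmxDl; exact: span_ofD.
move=> a i; rewrite -scalemxAl; apply: span_ofZ; move: Z Zspan; apply: span_of_ind.
- by rewrite mulmx0; exact: span_of0.
- by move=> Z1 Z2 ? ?; rewrite mulmxDr; exact: span_ofD.
by move=> b j; rewrite -scalemxAr; apply/span_ofZ/gen_mul.
Qed.

Lemma orbit_span p q : (exists g, G g /\ q = act g p) <->
  (exists c : 'I_k -> R, q = p + \sum_(i < k) c i *: bvec (X i) p).
Proof.
split => [[g [/G_one_add_span [Y [c ->] ->] ->]] | [c ->]].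
  by exists c; rewrite act_one_add bvec_sum.
exists (1%:M + \sum_i c i *: X i); split; last by rewrite act_one_add bvec_sum.
apply: (subgroup_one_add_span span_sqr0 span_mul_closed G_sub G_one_add_gen).
by exists c.
Qed.

Lemma orbit_rank p : \rank (\matrix_(i < k) (bvec (X i) p)^T) = k.
Proof.
apply/eqP; apply: inj_row_free => u uM.
set Y := \sum_i u 0 i *: X i.
have Yspan : span Y by exists (fun i => u 0 i).
have [Ydl Ydr] := span_bottom Yspan.
have Yp : bvec Y p = 0.
  rewrite bvec_sum; apply: trmx_inj; rewrite trmx0 -uM mulmx_sum_row linear_sum /=.
  by apply: eq_bigr => i _; rewrite rowK linearZ.
have Yq q : bvec Y q = 0.
  have [c [[L [w [cE _]]] [cG cpq]]] := G_tr p q.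
  rewrite -cpq cE bvec_act // ?Yp ?mulmx0 //.
  by rewrite -cE; exact: span_centralized.
have v0 : ursubmx Y = 0 by have := Yq 0; rewrite /bvec mulmx0 add0r.
have A0 : ulsubmx Y = 0.
  by apply: mx_eq0_of_mul_eq0 => y; have := Yq y; rewrite /bvec v0 addr0.
have Y0 : Y = 0 by rewrite -[Y]submxK v0 A0 Ydl Ydr block_mx0.
case: X_malcev => _ _ X_free _; apply/matrixP => a i; rewrite (ord1 a) mxE.
exact: X_free Y0 i.
Qed.

End Orbits.

Lemma form_of_signature_nondeg (R : realType) n s (S : 'M[R]_n) :
  form_of_signature s S -> S^T = S /\ S \in unitmx.
Proof.
move=> [_ [S_sym [P [P_unit SE]]]]; split => //; rewrite SE.
rewrite !unitmx_mul unitmx_tr P_unit andbT /= unitmxE unitfE det_diag.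
by apply/prodf_neq0 => i _; rewrite mxE; case: ifP => _; rewrite ?oppr_eq0 oner_neq0.
Qed.

Unset Implicit Arguments.

Theorem proposition4p1 (R : realType) (n s k : nat) (S : 'M[R]_n)
  (G : set 'M[R]_(n + 1)) (X : 'I_k -> 'M[R]_(n + 1)) :
  form_of_signature s S ->
  is_subgroup G ->
  G `<=` Iso S ->
  zariski_closed G ->
  unipotent_group G ->
  (forall p q : 'cV[R]_n, exists c, Iso S c /\
      (forall g, G g -> c *m g = g *m c) /\ act c p = q) ->
  malcev_basis G X ->
  forall p : 'cV[R]_n,
    (forall q : 'cV[R]_n,
       (exists g, G g /\ q = act g p) <->
       (exists c : 'I_k -> R, q = p + \sum_(i < k) c i *: bvec (X i) p)) /\
    \rank (\matrix_(i < k) (bvec (X i) p)^T) = k.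
Proof.
move=> S_form G_sub G_Iso _ _ G_tr X_malcev p.
have [S_sym S_unit] := form_of_signature_nondeg S_form.
split; first exact: orbit_span S_sym S_unit G_sub G_Iso G_tr X_malcev p.
exact: orbit_rank G_Iso G_tr X_malcev p.
Qed.
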